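(* Let $\lambda_i \ge 0$, $\mu \ge 0$, $\alpha_i \in (0,1]$, $\sigma_i^2 > 0$, $t_i \in \mathbb{R}$, and let $h_i \neq 0$ be a fixed fading coefficient. Consider the maximization problem $$\sup_{p_i \ge 0} \left\{ -\frac{\lambda_i}{\alpha_i}\bigl(t_i - r_i(p_i,h_i)\bigr)_+ - \mu p_i \right\}, \qquad r_i(p_i,h_i) = \log\left(1 + \frac{p_i h_i^2}{\sigma_i^2}\right).$$ If $(\lambda_i,\mu) \neq (0,0)$, then an optimal solution of this problem is $$p_i^*(h_i) = \min\left\{ \left(\frac{\lambda_i}{\mu\alpha_i} - \frac{\sigma_i^2}{h_i^2}\right)_+,\ \frac{\sigma_i^2\left(e^{(t_i)_+}-1\right)}{h_i^2} \right\}.$$ If $(\lambda_i,\mu) = (0,0)$, then $p_i^* = 0$ is optimal.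
   Context: $(x)_+ = \max\{x,0\}$. When $\mu = 0$ and $\lambda_i>0$, the quantity $\frac{\lambda_i}{\mu\alpha_i}$ is interpreted as $+\infty$, so that the minimum equals its second argument. The problem arises as the per-terminal power-allocation subproblem of the Lagrangian dual of a CV@R-constrained (risk-aware) power allocation problem, with $\lambda_i,\mu$ dual variables, $\alpha_i$ a CV@R confidence level, $\sigma_i^2$ the noise variance, and $t_i$ an auxiliary (value-at-risk) variable. *)

From Stdlib Require Import Reals Lra.
Open Scope R_scope.

Definition pos_part (x : R) : R := Rmax x 0.

Definition rate (sigma2 p h : R) : R := ln (1 + p * h ^ 2 / sigma2).

Definition objective (lam mu alpha sigma2 t h p : R) : R :=
  - (lam / alpha) * pos_part (t - rate sigma2 p h) - mu * p.

Definition is_optimal (lam mu alpha sigma2 t h p : R) : Prop :=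
  0 <= p /\
  forall q : R, 0 <= q -> objective lam mu alpha sigma2 t h q <= objective lam mu alpha sigma2 t h p.

(* closed-form p^*; when mu = 0 the term lam/(mu alpha) is +infinity
   (for lam > 0), so the min equals its second argument. *)
Definition p_star (lam mu alpha sigma2 t h : R) : R :=
  let cap := sigma2 * (exp (pos_part t) - 1) / h ^ 2 in
  if Req_EM_T mu 0 then cap
  else Rmin (pos_part (lam / (mu * alpha) - sigma2 / h ^ 2)) cap.

(** The objective equals [min (c ln (1 + k q) - c t, 0) - mu q] with [c = lam / alpha] and
    [k = h^2 / sigma2]; it is concave, and the tangent inequality for [ln] bounds its
    smooth part [c ln (1 + k q) - mu q] by its linearisation at any point [p].  Powers
    above [cap = (e^(t+) - 1) / k], where the rate reaches [t+], only cost [mu q], so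
    the optimum is either the unconstrained maximiser [(c/mu - 1/k)+] of the smooth
    part, when it lies below [cap], or [cap] itself, where the smooth part is still
    nondecreasing. *)
From Stdlib Require Import Reals Lra.
Open Scope R_scope.

Lemma ln_le_tangent x y : 0 < x -> 0 < y -> ln y <= ln x + (y - x) / x.
Proof.
  intros Hx Hy.
  assert (Hyx : 0 < y / x) by (apply Rdiv_lt_0_compat; lra).
  assert (Hexp := exp_ineq1_le (ln (y / x))).
  rewrite exp_ln in Hexp by exact Hyx.
  unfold Rdiv at 1 in Hexp.
  rewrite ln_mult, ln_Rinv in Hexp by (try apply Rinv_0_lt_compat; lra).
  replace ((y - x) / x) with (y / x - 1) by (field; lra).
  lra.
Qed.

Lemma pos_part_ge x : x <= pos_part x.
Proof. apply Rmax_l. Qed.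

Lemma pos_part_ge0 x : 0 <= pos_part x.
Proof. apply Rmax_r. Qed.

Lemma pos_part_pos x : 0 < pos_part x -> pos_part x = x.
Proof.
  unfold pos_part; intros Hx.
  destruct (Rle_dec 0 x) as [Hle | Hlt].
  - now apply Rmax_left.
  - rewrite Rmax_right in Hx; lra.
Qed.

Definition reduced_objective (c mu k t q : R) : R :=
  - c * pos_part (t - ln (1 + k * q)) - mu * q.

Lemma objective_reduced lam mu alpha sigma2 t h q :
  objective lam mu alpha sigma2 t h q
  = reduced_objective (lam / alpha) mu (h ^ 2 / sigma2) t q.
Proof.
  unfold objective, reduced_objective, rate.
  now replace (q * h ^ 2 / sigma2) with (h ^ 2 / sigma2 * q) by (unfold Rdiv; ring).
Qed.

Lemma is_optimal_of_reduced lam mu alpha sigma2 t h p : 0 <= p ->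
  (forall q, 0 <= q -> reduced_objective (lam / alpha) mu (h ^ 2 / sigma2) t q
                       <= reduced_objective (lam / alpha) mu (h ^ 2 / sigma2) t p) ->
  is_optimal lam mu alpha sigma2 t h p.
Proof.
  intros Hp Hmax; split; [exact Hp |].
  intros q Hq; rewrite !objective_reduced; now apply Hmax.
Qed.

Section ReducedProblem.

Variables c mu k t : R.
Hypothesis c_ge0 : 0 <= c.
Hypothesis mu_ge0 : 0 <= mu.
Hypothesis k_gt0 : 0 < k.

Let F := reduced_objective c mu k t.
Let utility (q : R) : R := c * ln (1 + k * q) - mu * q.
Let cap : R := (exp (pos_part t) - 1) / k.

Lemma one_add_kq_gt0 q : 0 <= q -> 0 < 1 + k * q.
Proof. intros Hq; assert (0 <= k * q) by (apply Rmult_le_pos; lra); lra. Qed.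

Lemma utility_supergradient p q : 0 <= p -> 0 <= q ->
  utility q <= utility p + (c * k / (1 + k * p) - mu) * (q - p).
Proof.
  intros Hp Hq; unfold utility.
  assert (Hxp := one_add_kq_gt0 p Hp).
  assert (Htan := ln_le_tangent (1 + k * p) (1 + k * q) Hxp (one_add_kq_gt0 q Hq)).
  replace ((c * k / (1 + k * p) - mu) * (q - p))
    with (c * ((1 + k * q - (1 + k * p)) / (1 + k * p)) - mu * (q - p)) by (field; lra).
  assert (c * ln (1 + k * q) <= c * (ln (1 + k * p) + (1 + k * q - (1 + k * p)) / (1 + k * p)))
    by (apply Rmult_le_compat_l; lra).
  lra.
Qed.

Lemma utility_nondecreasing p q : 0 <= q <= p -> mu * (1 + k * p) <= c * k ->
  utility q <= utility p.
Proof.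
  intros Hqp Hslope.
  assert (Hxp := one_add_kq_gt0 p ltac:(lra)).
  assert (Hs : mu <= c * k / (1 + k * p)).
  { apply (Rmult_le_reg_r (1 + k * p)); [lra |].
    unfold Rdiv; rewrite Rmult_assoc, Rinv_l; lra. }
  assert (Hsup := utility_supergradient p q ltac:(lra) ltac:(lra)).
  assert ((c * k / (1 + k * p) - mu) * (q - p) <= 0) by nra.
  lra.
Qed.

(* On the interior branch the slope [c k / (1 + k p) - mu] vanishes at [p]; on the
   boundary branch [p = 0] it is nonpositive. *)
Lemma utility_le_unconstrained_max q : 0 < mu -> 0 <= q ->
  utility q <= utility (pos_part (c / mu - 1 / k)).
Proof.
  intros Hmu Hq.
  set (p := pos_part (c / mu - 1 / k)).
  assert (Hsup := utility_supergradient p q (pos_part_ge0 _) Hq).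
  destruct (Rle_lt_dec p 0) as [Hp0 | Hp].
  - assert (Hp : p = 0) by (assert (Hp := pos_part_ge0 (c / mu - 1 / k)); fold p in Hp; lra).
    assert (Hck : c * k <= mu).
    { assert (Hle := pos_part_ge (c / mu - 1 / k)); fold p in Hle; rewrite Hp in Hle.
      apply (Rmult_le_compat_r (mu * k)) in Hle; [| nra].
      replace ((c / mu - 1 / k) * (mu * k)) with (c * k - mu) in Hle by (field; lra).
      lra. }
    rewrite Hp in Hsup |- *.
    replace (c * k / (1 + k * 0) - mu) with (c * k - mu) in Hsup by (field; lra).
    assert ((c * k - mu) * (q - 0) <= 0) by nra.
    lra.
  - assert (Hpe : p = c / mu - 1 / k) by now apply pos_part_pos.
    assert (Hc : 0 < c).
    { destruct c_ge0 as [Hc | Hc]; [exact Hc |].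
      rewrite <- Hc in Hpe; unfold Rdiv in Hpe.
      assert (0 < / k) by now apply Rinv_0_lt_compat.
      lra. }
    assert (Hkp : 1 + k * p = c * k / mu) by (rewrite Hpe; field; lra).
    replace (c * k / (1 + k * p) - mu) with 0 in Hsup
      by (rewrite Hkp; field; repeat split; lra).
    lra.
Qed.

Lemma reduced_objective_le_neg q : F q <= - (mu * q).
Proof.
  unfold F, reduced_objective.
  assert (0 <= c * pos_part (t - ln (1 + k * q))) by (apply Rmult_le_pos; [lra | apply pos_part_ge0]).
  lra.
Qed.

Lemma reduced_objective_le_utility q : F q <= utility q - c * t.
Proof.
  unfold F, reduced_objective, utility.
  assert (c * (t - ln (1 + k * q)) <= c * pos_part (t - ln (1 + k * q)))
    by (apply Rmult_le_compat_l; [lra | apply pos_part_ge]).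
  lra.
Qed.

Lemma cap_ge0 : 0 <= cap.
Proof.
  unfold cap, Rdiv.
  assert (Hexp := exp_ineq1_le (pos_part t)).
  assert (Ht := pos_part_ge0 t).
  apply Rmult_le_pos; [lra | left; now apply Rinv_0_lt_compat].
Qed.

Lemma ln_one_add_k_cap : ln (1 + k * cap) = pos_part t.
Proof.
  unfold cap.
  replace (1 + k * ((exp (pos_part t) - 1) / k)) with (exp (pos_part t)) by (field; lra).
  apply ln_exp.
Qed.

Lemma pos_part_of_cap_gt0 : 0 < cap -> pos_part t = t.
Proof.
  intros Hcap; apply pos_part_pos.
  destruct (pos_part_ge0 t) as [Ht | Ht]; [exact Ht |].
  unfold cap in Hcap; rewrite <- Ht, exp_0 in Hcap.
  unfold Rdiv in Hcap; lra.
Qed.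

Lemma reduced_objective_cap : F cap = - (mu * cap).
Proof.
  unfold F, reduced_objective; rewrite ln_one_add_k_cap.
  replace (pos_part (t - pos_part t)) with 0; [ring |].
  symmetry; apply Rmax_right; assert (Ht := pos_part_ge t); lra.
Qed.

Lemma reduced_objective_below_cap p : 0 <= p < cap -> F p = utility p - c * t.
Proof.
  intros Hp.
  assert (Ht := pos_part_of_cap_gt0 ltac:(lra)).
  assert (Hln : ln (1 + k * p) < t).
  { rewrite <- Ht, <- ln_one_add_k_cap.
    apply ln_increasing; [now apply one_add_kq_gt0 |].
    apply Rplus_lt_compat_l, Rmult_lt_compat_l; lra. }
  unfold F, reduced_objective, utility, pos_part.
  rewrite (Rmax_left (t - ln (1 + k * p)) 0) by lra.
  ring.
Qed.

Lemma reduced_objective_max_at_cap :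
  (0 < cap -> mu * (1 + k * cap) <= c * k) ->
  forall q, 0 <= q -> F q <= F cap.
Proof.
  intros Hslope q Hq.
  rewrite reduced_objective_cap.
  assert (Hneg := reduced_objective_le_neg q).
  destruct (Rle_lt_dec cap q) as [Hcap | Hcap].
  - assert (mu * cap <= mu * q) by (apply Rmult_le_compat_l; lra).
    lra.
  - assert (Hu := utility_nondecreasing cap q ltac:(lra) (Hslope ltac:(lra))).
    assert (Hcap_eq := reduced_objective_below_cap q ltac:(lra)).
    assert (Ht := pos_part_of_cap_gt0 ltac:(lra)).
    assert (Hucap : utility cap = c * t - mu * cap)
      by (unfold utility; rewrite ln_one_add_k_cap, Ht; ring).
    lra.
Qed.

Lemma reduced_objective_max_below_cap p : 0 <= p < cap ->
  (forall q, 0 <= q -> utility q <= utility p) ->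
  forall q, 0 <= q -> F q <= F p.
Proof.
  intros Hp Hmax q Hq.
  rewrite (reduced_objective_below_cap p Hp).
  assert (Hle := reduced_objective_le_utility q).
  assert (Hu := Hmax q Hq).
  lra.
Qed.

Lemma slope_nonneg_below_unconstrained_max x : 0 < mu -> 0 < x ->
  x <= pos_part (c / mu - 1 / k) -> mu * (1 + k * x) <= c * k.
Proof.
  intros Hmu Hx Hle.
  rewrite pos_part_pos in Hle by lra.
  apply (Rmult_le_compat_r (mu * k)) in Hle; [| nra].
  replace ((c / mu - 1 / k) * (mu * k)) with (c * k - mu) in Hle by (field; lra).
  lra.
Qed.

End ReducedProblem.

Theorem theorem1 (lam mu alpha sigma2 t h : R) :
  0 <= lam -> 0 <= mu -> 0 < alpha <= 1 -> 0 < sigma2 -> h <> 0 ->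
  ((lam, mu) <> (0, 0) -> is_optimal lam mu alpha sigma2 t h (p_star lam mu alpha sigma2 t h)) /\
  ((lam, mu) = (0, 0) -> is_optimal lam mu alpha sigma2 t h 0).
Proof.
  intros Hlam Hmu Halpha Hsigma Hh.
  assert (Hh2 : 0 < h ^ 2) by (apply pow_lt_pos_nonzero || nra).
  set (c := lam / alpha); set (k := h ^ 2 / sigma2).
  assert (Hc : 0 <= c) by (apply Rmult_le_pos; [lra | left; apply Rinv_0_lt_compat; lra]).
  assert (Hk : 0 < k) by (apply Rdiv_lt_0_compat; lra).
  split.
  (* The case [(lam, mu) = (0, 0)] is covered as well: the objective is then constant. *)
  - intros _.
    unfold p_star.
    replace (sigma2 * (exp (pos_part t) - 1) / h ^ 2) with ((exp (pos_part t) - 1) / k)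
      by (unfold k; field; lra).
    assert (Hcap := cap_ge0 k t Hk).
    destruct (Req_EM_T mu 0) as [Hmu0 | Hmu0].
    + apply is_optimal_of_reduced; [exact Hcap |]; fold c k.
      apply reduced_objective_max_at_cap; [exact Hc | exact Hmu | exact Hk |].
      intros _; rewrite Hmu0; nra.
    + replace (lam / (mu * alpha) - sigma2 / h ^ 2) with (c / mu - 1 / k)
        by (unfold c, k; field; repeat split; lra).
      destruct (Rle_lt_dec ((exp (pos_part t) - 1) / k) (pos_part (c / mu - 1 / k))).
      * rewrite Rmin_right by assumption.
        apply is_optimal_of_reduced; [exact Hcap |]; fold c k.
        apply reduced_objective_max_at_cap; [exact Hc | exact Hmu | exact Hk |].
        intros Hpos; apply slope_nonneg_below_unconstrained_max; lra.
      * rewrite Rmin_left by lra.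
        apply is_optimal_of_reduced; [apply pos_part_ge0 |]; fold c k.
        apply reduced_objective_max_below_cap; [exact Hc | exact Hk | |].
        -- split; [apply pos_part_ge0 | assumption].
        -- intros q Hq; apply utility_le_unconstrained_max; lra.
  - intros Hzero; injection Hzero as -> ->.
    apply is_optimal_of_reduced; [lra |].
    intros q _; unfold reduced_objective, Rdiv; lra.
Qed.
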